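(* Let $n\ge 2$, let $d$ be prime, and let $f:\mathbb{Z}_{c_1}\times\cdots\times\mathbb{Z}_{c_n}\to\mathbb{Z}_d$ be a function that is not bipartite linear. Then the only non-signalling distribution $p(\mathbf{m}|\mathbf{s})$ (with $m_j\in\mathbb{Z}_d$) whose correlator is the deterministic correlator $p(k|\mathbf{s})=\delta^k_{f(\mathbf{s})}$ is $$p(\mathbf{m}|\mathbf{s})=\begin{cases} d^{1-n} & \text{if } [\sum_{j=1}^n m_j]_d=f(\mathbf{s}),\\ 0&\text{otherwise.}\end{cases}$$
   Context: Correlator: $p(k|\mathbf{s})=\sum_{\mathbf{m}:[\sum_j m_j]_d=k}p(\mathbf{m}|\mathbf{s})$, with $[\cdot]_d$ reduction mod $d$. Non-signalling: for every subset $\mathcal{J}\subseteq\{1,\dots,n\}$ and inputs $\mathbf{s},\mathbf{s}'$ that agree on all coordinates outside $\mathcal{J}$, $\sum_{(m_j)_{j\in\mathcal{J}}}p(\mathbf{m}|\mathbf{s})=\sum_{(m_j)_{j\in\mathcal{J}}}p(\mathbf{m}|\mathbf{s}')$. A function $f$ is bipartite linear if there exist a nonempty proper subset $\mathcal{J}\subset\{1,\dots,n\}$ with complement $\mathcal{J}^c$ and functions $f^1$ of $(s_j)_{j\in\mathcal{J}}$ and $f^2$ of $(s_j)_{j\in\mathcal{J}^c}$, both valued in $\mathbb{Z}_d$, with $f(\mathbf{s})=[f^1((s_j)_{j\in\mathcal{J}})+f^2((s_j)_{j\in\mathcal{J}^c})]_d$. *)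

From HB Require Import structures.
From mathcomp Require Import all_boot all_order all_algebra.
Set Implicit Arguments. Unset Strict Implicit. Unset Printing Implicit Defensive.
Import Order.TTheory GRing.Theory Num.Theory.

Definition inputs (n : nat) (c : 'I_n -> nat) : finType :=
  {dffun forall j : 'I_n, 'I_(c j)}.

Definition outputs (n d : nat) : finType := {ffun 'I_n -> 'I_d}.

Definition sum_mod (n d : nat) (m : outputs n d) : nat := (\sum_(j < n) (m j : nat)) %% d.

Local Open Scope ring_scope.

Definition is_distribution (R : realFieldType) n d (c : 'I_n -> nat)
  (p : inputs c -> outputs n d -> R) : Prop :=
  (forall s m, 0 <= p s m) /\ (forall s, \sum_(m : outputs n d) p s m = 1).

Definition non_signalling (R : realFieldType) n d (c : 'I_n -> nat)
  (p : inputs c -> outputs n d -> R) : Prop :=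
  forall (J : {set 'I_n}) (s s' : inputs c),
    (forall j, j \notin J -> s j = s' j) ->
    forall m0 : outputs n d,
      \sum_(m : outputs n d | [forall j, (j \notin J) ==> (m j == m0 j)]) p s m =
      \sum_(m : outputs n d | [forall j, (j \notin J) ==> (m j == m0 j)]) p s' m.

Definition correlator (R : realFieldType) n d (c : 'I_n -> nat)
  (p : inputs c -> outputs n d -> R) (s : inputs c) (k : nat) : R :=
  \sum_(m : outputs n d | sum_mod m == k) p s m.

Definition depends_only_on n (c : 'I_n -> nat) (T : Type)
  (J : {set 'I_n}) (g : inputs c -> T) : Prop :=
  forall s s' : inputs c, (forall j, j \in J -> s j = s' j) -> g s = g s'.

Definition bipartite_linear n d (c : 'I_n -> nat) (f : inputs c -> 'I_d) : Prop :=
  exists J : {set 'I_n}, [/\ J != set0, J != setT &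
    exists f1 f2 : inputs c -> 'I_d,
      [/\ depends_only_on J f1, depends_only_on (~: J) f2 &
          forall s, (f s : nat) = (((f1 s : nat) + (f2 s : nat)) %% d)%N]].

From HB Require Import structures.
From mathcomp Require Import all_boot all_order all_algebra ring zify.
From Stdlib Require Import Classical.
Import Order.TTheory GRing.Theory Num.Theory.

(* For a coefficient vector t, let D_t(s) be the law of t.m mod d under p(.|s).
   As sum_j m_j = f(s) mod d on the support, adding a constant a to t translates
   D_t(s) by a f(s); by non-signalling, D_t(s) only depends on the inputs s_j with
   t_j <> 0 mod d.  Let t be non-constant mod d.  If D_t(s) is not uniform for some
   s, then it is not uniform for any s (uniformity propagates one input at a time),
   and chasing translations around squares of inputs gives
   f(x,y) + f(x',y') = f(x',y) + f(x,y') mod d for the splitting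
   J = {i | t_i = t_i0 mod d}: f would be bipartite linear.  So D_t(s) is uniform
   for every non-constant t, whereas a constant t = a gives the point mass at a f(s).
   Summing Pr[t.m = t.m*] over all t in Z_d^n, and using that t.v = 0 has d^(n-1)
   solutions for v <> 0, then determines p(m*|s). *)

Set Implicit Arguments.
Unset Strict Implicit.

Lemma eqn_mod_absz (d x y : nat) : (x == y %[mod d]) = (d %| `|(x%:Z - y%:Z)%R|).
Proof. by rewrite -(dvdzE d) -eqz_mod_dvd !modz_nat eqz_nat. Qed.

Lemma eqn_mod_cancel (d a b P Q : nat) : prime d -> ~~ (a == b %[mod d]) ->
  a * Q + b * P = a * P + b * Q %[mod d] -> P = Q %[mod d].
Proof.
move=> d_prime neq_ab /eqP; rewrite !eqn_mod_absz => dvd_diff; apply/eqP.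
have diffE : ((a * Q + b * P)%N%:Z - (a * P + b * Q)%N%:Z
              = (a%:Z - b%:Z) * (Q%:Z - P%:Z))%R.
  by rewrite !PoszD !PoszM; ring.
rewrite eqn_mod_absz in neq_ab.
rewrite diffE abszM Euclid_dvdM // (negbTE neq_ab) /= in dvd_diff.
by rewrite eqn_mod_absz -opprB abszN.
Qed.

Lemma eqn_mod_add_chain (d A B C D E F : nat) :
  A + B = C + D %[mod d] -> D + E = B + F %[mod d] -> A + E = C + F %[mod d].
Proof.
move=> eq1 eq2; apply/eqP; rewrite -(eqn_modDr (B + D)).
have -> : A + E + (B + D) = (A + B) + (D + E) by ring.
rewrite -modnDm eq1 eq2 modnDm; apply/eqP; congr (_ %% d); ring.
Qed.

Section ModArith.
Variable d : nat.
Hypothesis d_gt0 : 0 < d.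

Lemma modn_add_compl u : (u + (d - u %% d)) %% d = 0.
Proof. by rewrite -modnDml subnKC ?modnn // ltnW // ltn_pmod. Qed.

Lemma dvdn_add_compl u w : (d %| u + (d - w %% d)) = (u == w %[mod d]).
Proof. by rewrite /dvdn -(eqn_modDr (d - w %% d)) modn_add_compl. Qed.

Lemma modn_compl_addK u k : (k + (d - u %% d) + u) %% d = k %% d.
Proof. by rewrite -addnA (addnC _ u) -modnDmr modn_add_compl addn0. Qed.

Lemma eqn_mod_addpredM x y : (x == y %[mod d]) = (x + d.-1 * y == 0 %[mod d]).
Proof.
rewrite -[in RHS](eqn_modDr y) add0n -addnA -mulSnr prednK //.
by rewrite -modnDmr modnMr addn0.
Qed.
End ModArith.

Section PeriodicFunctions.
Variables (T : Type) (d : nat).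
Hypothesis d_gt0 : 0 < d.
Implicit Types (h : nat -> T) (k u v : nat).

Definition periodic h := forall k, h (k %% d) = h k.
Definition is_const h := forall k, h k = h 0.
Definition transl h h' u v := forall k, h (k + u) = h' (k + v).

Lemma periodic_shift_const h e : coprime d e -> periodic h ->
  (forall k, h (k + e) = h k) -> is_const h.
Proof.
move=> coprime_de h_per h_inv.
have h_iter j k : h (k + j * e) = h k.
  by elim: j => [|j IHj]; rewrite ?mul0n ?addn0 // mulSn addnA addnAC h_inv.
have [x _ dvd_xe] := Bezoutl e d_gt0; rewrite (eqP coprime_de) in dvd_xe.
move=> k; rewrite -(h_iter (k * x) k) -h_per.
by rewrite -mulnA -[k in k + _]muln1 -mulnDr (eqP (dvdn_mull _ dvd_xe)).
Qed.

Lemma transl_sym h h' u v : transl h h' u v -> transl h' h v u.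
Proof. by move=> hh' k; rewrite hh'. Qed.

Lemma transl_trans h1 h2 h3 u v u' v' :
  transl h1 h2 u v -> transl h2 h3 u' v' -> transl h1 h3 (u + u') (v + v').
Proof. by move=> h12 h23 k; rewrite addnA addnAC h12 addnAC h23 addnA. Qed.

Lemma transl_const h h' u v : periodic h -> transl h h' u v -> is_const h' -> is_const h.
Proof.
move=> h_per hh' h'_const.
suff hE k : h k = h' 0 by move=> k; rewrite !hE.
by rewrite -h_per -(modn_compl_addK d_gt0 u) h_per hh' h'_const.
Qed.

Lemma transl_self_mod h u v : prime d -> periodic h -> ~ is_const h ->
  transl h h u v -> u = v %[mod d].
Proof.
move=> d_prime h_per h_nconst hh; apply/eqP/negPn/negP => neq_uv; apply: h_nconst.
pose e := d - u %% d + v.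
have uE : (u + e) %% d = v %% d by rewrite addnA -modnDml modn_add_compl.
apply: (@periodic_shift_const _ e) => // [|k].
  rewrite prime_coprime //; move: neq_uv; apply: contra => /dvdnP [q eE].
  by rewrite -uE -modnDmr eE modnMl addn0.
by rewrite addnA -hh -h_per modn_compl_addK // h_per.
Qed.

Lemma transl_square h1 h2 h3 h4 (a b y1 y2 y3 y4 : nat) :
  prime d -> periodic h4 -> ~ is_const h4 -> ~~ (a == b %[mod d]) ->
  transl h1 h2 (a * y2) (a * y1) -> transl h3 h4 (a * y4) (a * y3) ->
  transl h1 h3 (b * y3) (b * y1) -> transl h2 h4 (b * y4) (b * y2) ->
  y1 + y4 = y2 + y3 %[mod d].
Proof.
(* Going around the square translates h4 into itself by
   a (y2 + y3) + b (y1 + y4) on one side and a (y1 + y4) + b (y2 + y3) on the other. *)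
move=> d_prime h4_per h4_nconst neq_ab h12 h34 h13 h24.
have h31 := transl_trans (transl_sym h34) (transl_sym h13).
have h44 := transl_trans (transl_trans h31 h12) h24.
apply: (eqn_mod_cancel d_prime neq_ab).
have := transl_self_mod d_prime h4_per h4_nconst h44.
by rewrite !mulnDr; congr (_ = _ %[mod d]); ring.
Qed.
End PeriodicFunctions.

Lemma big_mod_fibers (R : Type) (idx : R) (op : Monoid.com_law idx) (I : finType)
  (d : nat) (g : I -> nat) (F : I -> R) : 0 < d ->
  \big[op/idx]_(k < d) \big[op/idx]_(i | g i == k %[mod d]) F i = \big[op/idx]_i F i.
Proof.
move=> d_gt0; rewrite (exchange_big_dep xpredT) //=; apply: eq_bigr => i _.
rewrite (big_pred1 (Ordinal (ltn_pmod (g i) d_gt0))) // => k /=.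
by rewrite (modn_small (ltn_ord k)) eq_sym -val_eqE.
Qed.

Definition dotn n (t v : 'I_n -> nat) : nat := \sum_(j < n) t j * v j.

Definition natv n d (m : outputs n d) : 'I_n -> nat := fun j => m j.

Lemma dotn_addc n (t v : 'I_n -> nat) a :
  dotn (fun j => t j + a) v = dotn t v + a * \sum_(j < n) v j.
Proof. by rewrite /dotn big_distrr -big_split; apply: eq_bigr => j _; rewrite mulnDl. Qed.

Section DotFibers.
Variables (n d : nat).
Hypothesis d_gt0 : 0 < d.

Definition incr_at (j0 : 'I_n) (t : outputs n d) : outputs n d :=
  [ffun j => if j == j0 then Ordinal (ltn_pmod (t j).+1 d_gt0) else t j].

Lemma incr_at_inj j0 : injective (incr_at j0).
Proof.
move=> t1 t2 /ffunP eq12; apply/ffunP => j; have := eq12 j; rewrite !ffunE.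
case: eqP => [-> [] eq_mod|_ //]; apply: val_inj.
by move/eqP: eq_mod; rewrite -addn1 -[(t2 j0).+1]addn1 eqn_modDr !modn_small // => /eqP.
Qed.

Lemma dotn_incr_at j0 (t : outputs n d) v :
  dotn (natv (incr_at j0 t)) v = dotn (natv t) v + v j0 %[mod d].
Proof.
rewrite /dotn (bigD1 j0) // [in RHS](bigD1 j0) //= /natv ffunE eqxx /=.
rewrite (eq_bigr (fun j => t j * v j)) => [|j /negbTE j_neq]; last by rewrite ffunE j_neq.
by rewrite -modnDml modnMml modnDml; congr (_ %% d); ring.
Qed.

Lemma card_dotn_fiber (v : 'I_n -> nat) j0 k : prime d -> ~~ (d %| v j0) ->
  #|[set t : outputs n d | dotn (natv t) v == k %[mod d]]| = d ^ n.-1.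
Proof.
move=> d_prime v_j0.
pose G k := #|[set t : outputs n d | dotn (natv t) v == k %[mod d]]|.
have G_per : periodic d G by move=> k'; rewrite /G modn_mod.
have G_inv k' : G (k' + v j0) = G k'.
  rewrite /G -(card_preimset _ (@incr_at_inj j0)); apply: eq_card => t.
  by rewrite !inE dotn_incr_at eqn_modDr.
have coprime_d : coprime d (v j0) by rewrite prime_coprime.
have G_const := periodic_shift_const d_gt0 coprime_d G_per G_inv.
have G_sum : \sum_(k' < d) G k' = d ^ n.
  have -> : d ^ n = #|outputs n d| by rewrite card_ffun !card_ord.
  rewrite -sum1_card -(big_mod_fibers _ (fun t => dotn (natv t) v) _ d_gt0).
  by apply: eq_bigr => k' _; rewrite /G -sum1_card; apply: eq_bigl => t; rewrite inE.
rewrite -/(G k) G_const; apply/eqP; rewrite -(eqn_pmul2l d_gt0) -expnS.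
rewrite prednK ?(leq_ltn_trans _ (ltn_ord j0)) // -G_sum.
by under eq_bigr do rewrite G_const; rewrite sum_nat_const card_ord.
Qed.

Lemma card_dotn_eq (m ms : outputs n d) : prime d ->
  #|[set t : outputs n d | dotn (natv t) (natv m) == dotn (natv t) (natv ms) %[mod d]]|
  = if m == ms then d ^ n else d ^ n.-1.
Proof.
move=> d_prime; case: eqP => [<-|/eqP neq_m].
  by rewrite (eq_card (B := predT)) => [|t]; rewrite ?inE ?eqxx // card_ffun !card_ord.
have [j0 neq_j0] : exists j0, m j0 != ms j0.
  apply/existsP; rewrite -negb_forall; apply: contra neq_m => /forallP m_ms.
  by apply/eqP/ffunP => j; apply/eqP.
(* [v = m - ms] mod d *)
pose v j := m j + d.-1 * ms j.
have v_j0 : ~~ (d %| v j0).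
  by rewrite /dvdn -(mod0n d) -eqn_mod_addpredM // !modn_small.
rewrite -(card_dotn_fiber 0 d_prime v_j0); apply: eq_card => t.
rewrite !inE eqn_mod_addpredM //.
by rewrite /dotn big_distrr -big_split; under [in RHS]eq_bigr do rewrite mulnDr mulnCA.
Qed.
End DotFibers.

Lemma card_const_outputs n d : 0 < n -> #|[set ([ffun=> a] : outputs n d) | a : 'I_d]| = d.
Proof.
move=> n_gt0; rewrite card_imset ?card_ord // => a b /ffunP /(_ (Ordinal n_gt0)).
by rewrite !ffunE.
Qed.

Section Splice.
Variables (n : nat) (c : 'I_n -> nat).

Definition splice (J : {set 'I_n}) (x y : inputs c) : inputs c :=
  finfun (fun j => if j \in J then x j else y j).

Lemma spliceE J x y j : splice J x y j = if j \in J then x j else y j.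
Proof. by rewrite ffunE. Qed.

Lemma splice_id J x : splice J x x = x.
Proof. by apply/ffunP => j; rewrite spliceE if_same. Qed.

Lemma inputs_coord_ind (Q : inputs c -> Prop) :
  (forall (x y : inputs c) (j : 'I_n), (forall i, i != j -> x i = y i) -> Q x -> Q y) ->
  forall x y, Q x -> Q y.
Proof.
move=> Q_step x y Qx; pose z i := splice [set j : 'I_n | j < i] y x.
suff Qz i : i <= n -> Q (z i).
  by have := Qz n (leqnn n); congr Q; apply/ffunP => j; rewrite spliceE inE ltn_ord.
elim: i => [_|i IHi lt_in].
  by congr Q: Qx; apply/ffunP => j; rewrite spliceE inE.
apply: (Q_step _ _ (Ordinal lt_in)) (IHi (ltnW lt_in)) => j neq_j.
rewrite !spliceE !inE [in RHS]ltnS [in RHS]leq_eqVlt.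
have /negbTE -> // : nat_of_ord j != i.
by apply: contra neq_j => /eqP j_i; apply/eqP/val_inj.
Qed.

Definition splice_additive d (g : inputs c -> 'I_d) J (x x' y y' : inputs c) :=
  g (splice J x y) + g (splice J x' y') = g (splice J x' y) + g (splice J x y') %[mod d].

Lemma bipartite_linear_of_splice d (g : inputs c -> 'I_d) J (s0 : inputs c) :
  J != set0 -> J != setT -> (forall x x' y y', splice_additive g J x x' y y') ->
  bipartite_linear g.
Proof.
move=> J0 JT g_add; have d_gt0 : 0 < d by apply: leq_ltn_trans (ltn_ord (g s0)).
pose g1 s : 'I_d := Ordinal (ltn_pmod (g (splice J s s0) + (d - g s0)) d_gt0).
pose g2 s := g (splice J s0 s).
exists J; split => //; exists g1, g2; split.
- move=> s s' eq_J; apply: val_inj => /=; congr ((nat_of_ord (g _) + _) %% d).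
  by apply/ffunP => j; rewrite !spliceE; case: ifP => // /eq_J.
- move=> s s' eq_J; rewrite /g2; congr (g _).
  by apply/ffunP => j; rewrite !spliceE; case: ifP => // jJ; apply: eq_J; rewrite inE jJ.
move=> s; rewrite /= modnDml -[LHS](modn_small (ltn_ord (g s))); apply/eqP.
rewrite -(eqn_modDr (g s0)).
have -> : g (splice J s s0) + (d - g s0) + g2 s + g s0 = g (splice J s s0) + g2 s + d.
  by have := ltn_ord (g s0); lia.
by rewrite modnDr g_add !splice_id addnC.
Qed.
End Splice.

Local Open Scope ring_scope.

Section DeterministicCorrelator.
Variables (R : realFieldType) (n d : nat) (c : 'I_n -> nat).
Variables (f : inputs c -> 'I_d) (p : inputs c -> outputs n d -> R).
Hypothesis d_prime : prime d.
Hypothesis p_dist : is_distribution p.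
Hypothesis p_ns : non_signalling p.
Hypothesis p_corr : forall s k, correlator p s k = (k == (f s : nat))%:R.

Let d_gt0 : (0 < d)%N. Proof. exact: prime_gt0. Qed.

Lemma p_outside_support s m : sum_mod m != f s -> p s m = 0.
Proof.
have [p_ge0 p_sum1] := p_dist; move=> m_out.
have : \sum_(m' | sum_mod m' != f s) p s m' = 0.
  have := p_sum1 s; rewrite (bigID (fun m' => sum_mod m' == f s)) /=.
  have := p_corr s (f s); rewrite /correlator eqxx => -> /(congr1 (fun x => x - 1)).
  by rewrite addrC addrK subrr.
by move/psumr_eq0P; apply=> // m' _; apply: p_ge0.
Qed.

Lemma ns_marginal_local (K : {set 'I_n}) (T : eqType) (g : outputs n d -> T)
  (s s' : inputs c) (y : T) :
  (forall m m' : outputs n d, (forall j, j \in K -> m j = m' j) -> g m = g m') ->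
  (forall j, j \in K -> s j = s' j) ->
  \sum_(m | g m == y) p s m = \sum_(m | g m == y) p s' m.
Proof.
move=> g_local eq_s.
pose proj (m : outputs n d) : outputs n d :=
  [ffun j => if j \in K then m j else Ordinal d_gt0].
pose agree (m m0 : outputs n d) := [forall j, (j \notin ~: K) ==> (m j == m0 j)].
have projK m : proj (proj m) = proj m.
  by apply/ffunP => j; rewrite !ffunE; case: (j \in K).
have fiberE (m0 m : outputs n d) : proj m0 = m0 ->
    (g m == y) && (proj m == m0) = (g m0 == y) && agree m m0.
  move=> m0_fix; have agreeP : reflect (proj m = m0) (agree m m0).
    apply: (iffP forallP) => [agree_m|<- j]; last first.
      by rewrite in_setC negbK ffunE; apply/implyP => ->.
    rewrite -m0_fix; apply/ffunP => j; rewrite !ffunE; case: ifP => // jK.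
    by have := agree_m j; rewrite in_setC negbK jK => /eqP.
  case: agreeP => [<-|neq]; last by rewrite andbF; apply/andP => -[_ /eqP].
  by rewrite eqxx !andbT (@g_local m (proj m)) // => j jK; rewrite ffunE jK.
have marginal (s1 : inputs c) : \sum_(m | g m == y) p s1 m =
    \sum_(m0 | proj m0 == m0) \sum_(m | (g m0 == y) && agree m m0) p s1 m.
  rewrite (partition_big proj (fun m0 => proj m0 == m0)) => [|m _]; last exact/eqP/projK.
  by apply: eq_bigr => m0 /eqP m0_fix; apply: eq_bigl => m; rewrite fiberE.
rewrite !marginal; apply: eq_bigr => m0 _; case: (g m0 == y); last by rewrite !big_pred0.
by apply: p_ns => j; rewrite in_setC negbK; apply: eq_s.
Qed.

Definition dist_dot (t : 'I_n -> nat) (s : inputs c) (k : nat) : R :=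
  \sum_(m : outputs n d | dotn t (natv m) == k %[mod d]) p s m.

Lemma dist_dot_periodic t s : periodic d (dist_dot t s).
Proof. by move=> k; apply: eq_bigl => m; rewrite modn_mod. Qed.

Lemma dist_dot_sum t s : \sum_(k < d) dist_dot t s k = 1.
Proof.
have [_ p_sum1] := p_dist.
by rewrite (big_mod_fibers _ (fun m => dotn t (natv m)) _ d_gt0) p_sum1.
Qed.

Lemma dist_dot_shift t a s k :
  dist_dot (fun j => t j + a)%N s (k + a * f s) = dist_dot t s k.
Proof.
rewrite /dist_dot !(big_mkcond (fun m => _ == _ %[mod d])); apply: eq_bigr => m _.
have [m_in|m_out] := eqVneq (sum_mod m) (f s); last first.
  by rewrite p_outside_support // !if_same.
have sumE : ((\sum_(j < n) natv m j) %% d)%N = f s := m_in.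
by rewrite dotn_addc -modnDmr -modnMmr sumE modnDmr eqn_modDr.
Qed.

Lemma dist_dot_local t (s s' : inputs c) : (forall j, ~~ (d %| t j)%N -> s j = s' j) ->
  dist_dot t s =1 dist_dot t s'.
Proof.
move=> eq_s k; apply: (ns_marginal_local (K := [set j | ~~ (d %| t j)%N])
  (g := fun m => (dotn t (natv m) %% d)%N)) => [m m' eq_K|j]; last first.
  by rewrite inE; apply: eq_s.
rewrite /dotn /natv -[in LHS]modn_summ -[in RHS]modn_summ; congr (_ %% d)%N.
apply: eq_bigr => j _.
have [/eq_K -> //|] := boolP (j \in [set j | ~~ (d %| t j)%N]).
by rewrite inE negbK => /dvdnP [q ->]; rewrite mulnAC [in RHS]mulnAC !modnMl.
Qed.

Lemma dist_dot_transl t a (s s' : inputs c) :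
  (forall j, ~~ (d %| t j + a)%N -> s j = s' j) ->
  transl (dist_dot t s) (dist_dot t s') (a * f s') (a * f s).
Proof.
move=> eq_s k; rewrite -(dist_dot_shift t a s) -(dist_dot_shift t a s').
by rewrite (dist_dot_local eq_s) addnAC.
Qed.

Lemma dist_dot_const t a s : (forall j, t j = a) -> dist_dot t s (a * f s) = 1.
Proof.
move=> tE; have [_ p_sum1] := p_dist.
transitivity (dist_dot (fun=> 0%N) s 0).
  rewrite -[RHS](dist_dot_shift _ a) add0n; apply: eq_bigl => m.
  by congr (_ == _ %[mod d]); apply: eq_bigr => j _; rewrite tE.
rewrite -(p_sum1 s); apply: eq_bigl => m.
by rewrite /dotn big1 ?eqxx // => j _; rewrite mul0n.
Qed.

Let natrd_neq0 : (d%:R : R) != 0. Proof. by rewrite pnatr_eq0 -lt0n. Qed.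

Lemma dist_dot_uniform t s : is_const (dist_dot t s) -> forall k, dist_dot t s k = d%:R^-1.
Proof.
move=> t_const k; have := dist_dot_sum t s.
under eq_bigr do rewrite t_const; rewrite sumr_const card_ord t_const => sumE.
by apply: (mulIf natrd_neq0); rewrite mulVf // mulr_natr.
Qed.

Lemma dist_dot_const_transfer t x y : is_const (dist_dot t x) -> is_const (dist_dot t y).
Proof.
move: x y; apply: inputs_coord_ind => x y j eq_xy.
apply: (transl_const d_gt0 (dist_dot_periodic t y) (dist_dot_transl (a := d - t j %% d) _)).
move=> i ndvd; apply/esym/eq_xy; apply: contra ndvd => /eqP ->.
by rewrite dvdn_add_compl.
Qed.

Definition coeff_class (t : 'I_n -> nat) i0 : {set 'I_n} := [set i | t i == t i0 %[mod d]].

Section CoeffClass.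
Variables (t : 'I_n -> nat) (i0 : 'I_n).
Let J := coeff_class t i0.

Lemma splice_additive_single_change j (x x' z z' : inputs c) :
  ~ is_const (dist_dot t (splice J x' z')) -> j \notin J ->
  (forall i, i != j -> z i = z' i) -> splice_additive f J x x' z z'.
Proof.
(* [t + a] vanishes mod d exactly on J, and [t + b] at j. *)
move=> nconst jJ eq_z; pose a := (d - t i0 %% d)%N; pose b := (d - t j %% d)%N.
have J_class i : (d %| t i + a)%N = (i \in J) by rewrite dvdn_add_compl // inE.
have off_J w w' y : transl (dist_dot t (splice J w y)) (dist_dot t (splice J w' y))
    (a * f (splice J w' y)) (a * f (splice J w y)).
  by apply: dist_dot_transl => i; rewrite J_class !spliceE => /negbTE ->.
have at_j w : transl (dist_dot t (splice J w z)) (dist_dot t (splice J w z'))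
    (b * f (splice J w z')) (b * f (splice J w z)).
  apply: dist_dot_transl => i ndvd; rewrite !spliceE eq_z //.
  by apply: contra ndvd => /eqP ->; rewrite dvdn_add_compl.
apply: (transl_square d_gt0 d_prime (dist_dot_periodic _ _) nconst _
  (off_J _ _ _) (off_J _ _ _) (at_j _) (at_j _)).
apply: contra jJ => /eqP eq_ab; rewrite -J_class /dvdn -modnDmr eq_ab modnDmr.
by rewrite modn_add_compl.
Qed.

Lemma splice_additive_of_nonconst : (forall s, ~ is_const (dist_dot t s)) ->
  forall x x' y y', splice_additive f J x x' y y'.
Proof.
move=> nconst x x'.
suff step y (z z' : inputs c) j : (forall i, i != j -> z i = z' i) ->
    splice_additive f J x x' y z -> splice_additive f J x x' y z'.
  by move=> y y'; apply: (inputs_coord_ind (step y)); rewrite /splice_additive addnC.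
move=> eq_z IHz.
have [jJ|jJ] := boolP (j \in J).
  have same w : splice J w z = splice J w z'.
    apply/ffunP => i; rewrite !spliceE; case: ifP => // iJ.
    by apply: eq_z; apply: contraFneq iJ => ->.
  by rewrite /splice_additive -!same.
exact: eqn_mod_add_chain IHz (splice_additive_single_change _ (nconst _) jJ eq_z).
Qed.

Lemma bipartite_linear_of_nonconst i1 (s0 : inputs c) : ~~ (t i1 == t i0 %[mod d])%N ->
  (forall s, ~ is_const (dist_dot t s)) -> bipartite_linear f.
Proof.
move=> neq_i1 nconst; apply: (bipartite_linear_of_splice (J := J) s0).
- by apply/set0Pn; exists i0; rewrite inE.
- apply/eqP => JT; have : i1 \in J by rewrite JT inE.
  by rewrite inE (negbTE neq_i1).
- exact: splice_additive_of_nonconst.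
Qed.
End CoeffClass.

Lemma dist_dot_const_of_not_bipartite t i0 i1 s : ~ bipartite_linear f ->
  ~~ (t i1 == t i0 %[mod d])%N -> is_const (dist_dot t s).
Proof.
move=> nbl neq_i1; apply: NNPP => s_nconst.
apply/nbl/(bipartite_linear_of_nonconst s neq_i1).
by move=> s' s'_const; apply: s_nconst (dist_dot_const_transfer s s'_const).
Qed.

Definition collision_sum (s : inputs c) (ms : outputs n d) : R :=
  \sum_(t : outputs n d) dist_dot (natv t) s (dotn (natv t) (natv ms)).

Lemma collision_sumE s ms :
  collision_sum s ms = p s ms * d%:R ^+ n + (1 - p s ms) * d%:R ^+ n.-1.
Proof.
have [_ p_sum1] := p_dist.
have -> : collision_sum s ms = \sum_m p s m *
    #|[set t : outputs n d |
         dotn (natv t) (natv m) == dotn (natv t) (natv ms) %[mod d]]|%:R.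
  rewrite /collision_sum /dist_dot (exchange_big_dep xpredT) //=; apply: eq_bigr => m _.
  by rewrite -sum1dep_card natr_sum mulr_sumr; apply: eq_big => // t; rewrite mulr1.
rewrite (bigD1 ms) //= card_dotn_eq // eqxx natrX.
rewrite (eq_bigr (fun m => p s m * d%:R ^+ n.-1)) => [|m /negbTE neq_m]; last first.
  by rewrite card_dotn_eq // neq_m natrX.
rewrite -mulr_suml; congr (_ + _ * _); apply/eqP.
by rewrite eq_sym subr_eq addrC -(p_sum1 s) (bigD1 ms).
Qed.

Lemma collision_sum_support s ms : (0 < n)%N -> ~ bipartite_linear f -> sum_mod ms = f s ->
  collision_sum s ms = d%:R + (d%:R ^+ n - d%:R) / d%:R.
Proof.
move=> n_gt0 nbl ms_in; pose C := [set ([ffun=> a] : outputs n d) | a : 'I_d].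
have sum_C t : t \in C -> dist_dot (natv t) s (dotn (natv t) (natv ms)) = 1.
  case/imsetP => a _ ->; rewrite -dist_dot_periodic.
  have sumE : ((\sum_(j < n) ms j) %% d)%N = f s := ms_in.
  have -> : (dotn (natv [ffun=> a]) (natv ms) %% d = a * f s %% d)%N.
    rewrite /dotn /natv; under eq_bigr do rewrite ffunE.
    by rewrite -big_distrr /= -[in LHS]modnMmr sumE.
  by rewrite dist_dot_periodic (dist_dot_const _ (a := a)) // => j; rewrite /natv ffunE.
have sum_notC t : t \notin C -> dist_dot (natv t) s (dotn (natv t) (natv ms)) = d%:R^-1.
  move=> tC; pose i0 := Ordinal n_gt0.
  have [j neq_j] : exists j, t j != t i0.
    apply/existsP; rewrite -negb_forall; apply: contra tC => /forallP t_const.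
    by apply/imsetP; exists (t i0) => //; apply/ffunP => j; rewrite ffunE; apply/eqP.
  apply/dist_dot_uniform/(dist_dot_const_of_not_bipartite (i0 := i0) (i1 := j)) => //.
  by rewrite /natv !modn_small.
have card_nonconst : (#|[predC C]| + d = d ^ n)%N.
  by have := cardC C; rewrite card_const_outputs // card_ffun !card_ord addnC.
rewrite /collision_sum (bigID (mem C)) /= (eq_bigr _ sum_C) (eq_bigr _ sum_notC).
rewrite !sumr_const card_const_outputs //.
by rewrite -natrX -card_nonconst natrD addrK mulr_natl.
Qed.

Lemma p_on_support s ms : (0 < n)%N -> ~ bipartite_linear f -> sum_mod ms = f s ->
  p s ms = (d%:R ^+ n.-1)^-1.
Proof.
move=> n_gt0 nbl ms_in; set N := d%:R ^+ n.-1.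
have N_neq0 : N != 0 by rewrite expf_neq0.
have d_neq1 : d%:R - 1 != 0 :> R.
  by rewrite subr_eq0 pnatr_eq1 neq_ltn (prime_gt1 d_prime) orbT.
have := collision_sumE s ms; rewrite collision_sum_support // -(prednK n_gt0) exprS -/N.
have divE : (d%:R * N - d%:R) / d%:R = N - 1 by field.
rewrite divE => sumE.
have : (p s ms * N - 1) * (d%:R - 1) = 0.
  rewrite -[RHS](subrr (d%:R + (N - 1))) {1}sumE; ring.
move/eqP; rewrite mulf_eq0 (negbTE d_neq1) orbF subr_eq0 => /eqP pN.
by rewrite -[p s ms]mulr1 -(divff N_neq0) mulrA pN mul1r.
Qed.
End DeterministicCorrelator.

Theorem theorem2p3p1 (R : realFieldType) (n d : nat) (c : 'I_n -> nat)
  (f : inputs c -> 'I_d) (p : inputs c -> outputs n d -> R) :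
  (2 <= n)%N -> prime d -> ~ bipartite_linear f ->
  is_distribution p -> non_signalling p ->
  (forall s k, correlator p s k = (k == (f s : nat))%:R) ->
  forall s m, p s m = if sum_mod m == (f s : nat)
                      then ((d%:R : R) ^+ (n - 1))^-1 else 0.
Proof.
move=> n_ge2 d_prime nbl p_dist p_ns p_corr s m.
case: eqP => [m_in|/eqP m_out]; last exact: p_outside_support.
by rewrite subn1; apply: p_on_support => //; apply: ltnW.
Qed.
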